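(* Let $q=p^\ell$ be a prime power with $p$ prime and $d$ a positive integer; write $d+1=s(q-q/p)+r$ with integers $s\ge0$, $0\le r<q-q/p$. Let $k\ge s+1$, define $e^\star\in\{0,\dots,q-1\}^k$ by $e^\star_i=q-q/p$ for $1\le i\le s$, $e^\star_{s+1}=q-1$, $e^\star_j=0$ for $j\ge s+2$, let $d^\star=|e^\star|_1$, and let $\mathcal{E}=\{e\in\{0,\dots,q-1\}^k: |e|_1\le d^\star-1\}$. Let $Q(k)=2q^{s+1}\log(q)\binom{k+d^\star}{d^\star}$ and choose $S\subseteq\mathbb{F}_q^k$ uniformly at random among subsets of size $Q(k)$. Consider the linear system over $\mathbb{F}_q$ in variables $\{z_\alpha\}_{\alpha\in S}$ consisting of the equations $\sum_{\alpha\in S}z_\alpha\alpha^{e'}=0$ for each $e'\in\mathcal{E}$, together with $\sum_{\alpha\in S}z_\alpha\alpha^{e^\star}=1$. Then the probability that this system has no solution is at most $q^{-\binom{k+d^\star}{d^\star}}$.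
   Context: For $\alpha\in\mathbb{F}_q^k$ and $e\in\{0,\dots,q-1\}^k$, $\alpha^e=\prod_i\alpha_i^{e_i}$ (with $0^0=1$); $|e|_1=\sum_ie_i$. Here $\log$ is the natural logarithm, and it is implicitly assumed that $Q(k)$ is an integer with $Q(k)\le q^k$ so that $S$ can be chosen. *)

From HB Require Import structures.
From mathcomp Require Import all_boot all_order all_algebra all_field.
From Stdlib Require Rdefinitions Rpower.
From mathcomp Require Import Rstruct.
Notation R := Rdefinitions.R.
Local Open Scope ring_scope.

Set Implicit Arguments.
Unset Strict Implicit.
Unset Printing Implicit Defensive.

Import GRing.Theory Num.Theory.

Section Defs.
Variables (F : finFieldType) (k : nat).

Definition pt := {ffun 'I_k -> F}.

(* alpha^e = prod_i alpha_i^{e_i}  (with 0^0 = 1, as x ^+ 0 = 1) *)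
Definition mono (a : pt) (e : 'I_k -> nat) : F :=
  (\prod_(i < k) a i ^+ e i)%R.

Definition l1 (e : 'I_k -> nat) : nat := \sum_(i < k) e i.

Definition solvable (estar : 'I_k -> nat) (dstar : nat) (S : {set pt}) : bool :=
  [exists z : {ffun pt -> F},
     [forall e : {ffun 'I_k -> 'I_#|F|},
        (l1 (fun i => nat_of_ord (e i)) <= dstar - 1)%N ==>
        ((\sum_(a in S) z a * mono a (fun i => nat_of_ord (e i)))%R == 0%R)]
     && ((\sum_(a in S) z a * mono a estar)%R == 1%R)].

Definition prob_unsolvable (estar : 'I_k -> nat) (dstar Q : nat) : R :=
  (#|[set S : {set pt} | (#|S| == Q) && ~~ solvable estar dstar S]|%:R
   / #|[set S : {set pt} | #|S| == Q]|%:R).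

End Defs.

(* e* for q and s: e*_i = q - q/p (i < s), e*_s = q - 1, 0 otherwise
   (0-based indices) *)
Definition estar_of (k q p s : nat) (i : 'I_k) : nat :=
  if (i < s)%N then (q - q %/ p)%N else if (nat_of_ord i == s) then (q - 1)%N else 0%N.

(* If the system has no solution for S then, by linear duality, some reduced polynomial
   f = sum_e a_e x^e with a_{e*} <> 0 and all other monomials of degree <= d* vanishes on S.
   Since e* is supported on the first s+1 coordinates and has maximal degree, it is the only
   monomial of f with its restriction to these coordinates; so for every choice of the last
   k-s-1 coordinates f specialises to a nonzero reduced polynomial, which is not identically
   zero on F_q^(s+1).  Hence f has at least q^(k-s-1) non-zeros.  There are at most q^B such f,
   a uniform Q-subset avoids the non-zeros of a fixed f with probability at most
   (1 - q^-(s+1))^Q <= exp(-Q q^-(s+1)) <= q^-2B, and a union bound gives q^-B. *)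

From Stdlib Require Import Reals.
From HB Require Import structures.
From mathcomp Require Import all_boot all_order all_algebra all_field.
From Stdlib Require Rdefinitions Rpower.
From mathcomp Require Import Rstruct.
From mathcomp Require Import zify ring.

Set Implicit Arguments.
Unset Strict Implicit.
Unset Printing Implicit Defensive.

Import Order.TTheory GRing.Theory Num.Theory.

Section Counting.
Local Open Scope nat_scope.

Lemma leq_bin_ratio a N Q : a <= N -> 'C(a, Q) * N ^ Q <= a ^ Q * 'C(N, Q).
Proof.
move=> leaN; elim: Q => [|Q IHQ]; first by rewrite !bin0 !expn0.
rewrite -(@leq_pmul2l Q.+1) //.
have -> : Q.+1 * ('C(a, Q.+1) * N ^ Q.+1) = ((a - Q) * N) * ('C(a, Q) * N ^ Q).
  by rewrite mulnA mul_bin_left expnS; ring.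
have -> : Q.+1 * (a ^ Q.+1 * 'C(N, Q.+1)) = ((N - Q) * a) * (a ^ Q * 'C(N, Q)).
  by rewrite mulnCA mul_bin_left expnS; ring.
apply: leq_mul IHQ; nia.
Qed.

Lemma card_draws_covered (T A : finType) (Z : A -> {set T}) (P : {set A}) m Q :
  (forall a, a \in P -> #|Z a| <= m) ->
  #|[set S : {set T} | (#|S| == Q) && [exists a in P, S \subset Z a]]|
    <= #|P| * 'C(m, Q).
Proof.
move=> cardZ; rewrite -sum_nat_const.
have -> : [set S : {set T} | (#|S| == Q) && [exists a in P, S \subset Z a]]
          = \bigcup_(a in P) [set S : {set T} | S \subset Z a & #|S| == Q].
  apply/setP => S; rewrite inE; apply/andP/bigcupP => [[SQ /existsP[a /andP[aP SZ]]]|[a aP]].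
    by exists a; rewrite // inE SZ.
  by rewrite inE => /andP[SZ SQ]; split=> //; apply/existsP; exists a; rewrite aP.
elim/big_rec2: _ => [|a n U aP IH]; first by rewrite cards0.
rewrite (leq_trans (leq_card_setU _ _)) // leq_add // cards_draws.
by apply: leq_bin2l; apply: cardZ.
Qed.

Definition partial_sum k n (e : {ffun 'I_k -> 'I_n}) i := \sum_(j < k | j <= i) (e j : nat).

Lemma partial_sum_le k n (e : {ffun 'I_k -> 'I_n}) i : partial_sum e i <= \sum_j (e j : nat).
Proof. by rewrite [X in _ <= X](bigID (fun j : 'I_k => j <= i)) leq_addr. Qed.

Lemma partial_sum_inj k n (e f : {ffun 'I_k -> 'I_n}) :
  (forall i : 'I_k, partial_sum e i = partial_sum f i) -> e = f.
Proof.
move=> eq_ps; apply/ffunP.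
suff eq_below m (i : 'I_k) : i < m -> e i = f i by move=> i; apply: (eq_below k).
elim: m i => [//|m IHm] i lt_im.
have split_ps g : partial_sum g i = \sum_(j < k | j < i) (g j : nat) + g i.
  rewrite /partial_sum (bigD1 i) //= addnC; congr (_ + _).
  by apply: eq_bigl => j; rewrite andbC -ltn_neqAle.
have /eqP := eq_ps i.
rewrite !split_ps (eq_bigr (fun j => f j : nat)) => [|j lt_ji]; last first.
  by rewrite (IHm j) // (leq_trans lt_ji).
by rewrite eqn_add2l => /eqP /val_inj.
Qed.

(* Partial sums embed the bounded vectors into the nondecreasing k-tuples over [0, D]. *)
Lemma card_ffun_sum_le k n D :
  #|[set e : {ffun 'I_k -> 'I_n} | \sum_i (e i : nat) <= D]| <= 'C(k + D, D).
Proof.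
set A := [set e | _].
pose sums (e : {ffun 'I_k -> 'I_n}) : k.-tuple 'I_D.+1 :=
  [tuple inord (partial_sum e i) | i < k].
have sumsE e i : e \in A -> val (tnth (sums e) i) = partial_sum e i.
  rewrite inE => eA; rewrite tnth_mktuple /= inordK // ltnS.
  exact: leq_trans (partial_sum_le e i) eA.
have sums_inj : {in A &, injective sums}.
  move=> e f eA fA eq_sums; apply: partial_sum_inj => i.
  by rewrite -!sumsE // eq_sums.
have -> : 'C(k + D, D) = 'C(k + D, k) by rewrite -(bin_sub (leq_addr D k)) addKn.
rewrite -(card_in_imset sums_inj) -card_sorted_tuples.
apply/subset_leq_card/subsetP => _ /imsetP[e eA ->]; rewrite inE.
have -> : [seq val i | i <- sums e] = [seq partial_sum e i | i <- iota 0 k].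
  rewrite -val_enum_ord -!map_comp; apply: eq_map => i /=.
  by have := sumsE e i eA; rewrite tnth_mktuple.
apply: homo_sorted (iota_sorted 0 k) => i j le_ij.
rewrite /partial_sum [X in X <= _]big_mkcond [X in _ <= X]big_mkcond leq_sum // => l _.
by case: ifP => // le_li; rewrite (leq_trans le_li le_ij).
Qed.

Lemma card_setC_ord_leq k s : k - s.+1 <= #|~: [set i : 'I_k | i <= s]|.
Proof.
have le_s : #|[set i : 'I_k | i <= s]| <= s.+1.
  rewrite -[s.+1]card_ord; apply: (@leq_card_in _ _ (fun i : 'I_k => inord i : 'I_s.+1)).
  move=> i j; rewrite !inE => le_is le_js /(congr1 (@nat_of_ord _)).
  by rewrite !inordK // => /val_inj.
have := cardsC [set i : 'I_k | i <= s]; rewrite card_ord => split_k.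
by rewrite leq_subLR -{1}split_k leq_add2r.
Qed.

End Counting.

Local Open Scope ring_scope.

Section IndicatorPoly.
Variable F : finFieldType.

Definition indicator_poly (y : F) : {poly F} := 1 - ('X - y%:P) ^+ #|F|.-1.

Lemma size_indicator_poly y : (size (indicator_poly y) <= #|F|)%N.
Proof.
rewrite (leq_trans (size_polyD _ _)) // size_polyN size_exp_XsubC size_poly1.
by rewrite prednK ?geq_max ?leqnn ltnW ?card_finNzRing_gt1.
Qed.

Lemma indicator_polyE y x : (indicator_poly y).[x] = (x == y)%:R.
Proof.
rewrite !hornerE; have [->|neq_xy] := eqVneq x y.
  by rewrite subrr expr0n -subn1 subn_eq0 leqNgt card_finNzRing_gt1 subr0.
have nz : x - y != 0 by rewrite subr_eq0.
suff -> : (x - y) ^+ #|F|.-1 = 1 by rewrite subrr.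
apply: (mulIf nz); rewrite -exprSr prednK ?expf_card ?mul1r //.
exact/ltnW/card_finNzRing_gt1.
Qed.

End IndicatorPoly.

Section ReducedPoly.
Variables (F : finFieldType) (k : nat).

Definition expo := {ffun 'I_k -> 'I_#|F|}.

Definition monoE (x : pt F k) (e : expo) : F := mono x (fun i => e i).

Definition reduced_eval (a : {ffun expo -> F}) (x : pt F k) : F :=
  \sum_e a e * monoE x e.

Lemma reduced_eval_surj (g : pt F k -> F) : exists a, reduced_eval a =1 g.
Proof.
pose b (y : F) (j : 'I_#|F|) := (indicator_poly y)`_j.
have bP y x : \sum_j b y j * x ^+ j = (x == y)%:R.
  by rewrite -indicator_polyE (horner_coef_wide _ (size_indicator_poly y)).
pose delta (c : pt F k) : {ffun expo -> F} := [ffun e : expo => \prod_i b (c i) (e i)].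
have deltaP c x : reduced_eval (delta c) x = (x == c)%:R.
  rewrite /reduced_eval; under eq_bigr do rewrite ffunE -big_split.
  rewrite -(bigA_distr_bigA (fun i j => b (c i) j * x i ^+ j)).
  under eq_bigr do rewrite bP.
  have [->|neq_xc] := eqVneq x c; first by apply: big1 => i _; rewrite eqxx.
  have [i neq_i] : exists i, x i != c i.
    apply/existsP; apply: contraNT neq_xc => /existsPn eq_xc.
    by apply/eqP/ffunP => i; apply/eqP/negPn.
  by rewrite (bigD1 i) //= (negbTE neq_i) mul0r.
exists [ffun e => \sum_c g c * delta c e] => x.
rewrite /reduced_eval; under eq_bigr do rewrite ffunE mulr_suml.
rewrite exchange_big /=.
under eq_bigr do rewrite -(eq_bigr _ (fun e _ => mulrA _ _ _)) -mulr_sumr.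
rewrite (bigD1 x) //= -/(reduced_eval _ _) deltaP eqxx mulr1 big1 ?addr0 // => c neq_cx.
by rewrite -/(reduced_eval _ _) deltaP eq_sym (negbTE neq_cx) mulr0.
Qed.

Lemma reduced_eval_eq0 (a : {ffun expo -> F}) : reduced_eval a =1 (fun=> 0) -> a = 0.
Proof.
(* Reduced polynomials and functions F^k -> F are equinumerous, so the surjective
   evaluation map is injective. *)
pose ev (a : {ffun expo -> F}) := [ffun x => reduced_eval a x].
have ev_inj : {in predT &, injective ev}.
  apply/image_injP; rewrite eqn_leq leq_image_card /=.
  have -> : #|predT : {pred {ffun expo -> F}}| = #|{ffun pt F k -> F}|.
    by rewrite !cardT -!cardE !card_ffun !card_ord.
  apply/subset_leq_card/subsetP => g _.
  have [a' a'P] := reduced_eval_surj g.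
  by rewrite (_ : g = ev a') ?image_f //; apply/ffunP => x; rewrite ffunE a'P.
move=> a0; apply: ev_inj => //; apply/ffunP => x; rewrite !ffunE a0 /reduced_eval.
by rewrite big1 // => e _; rewrite ffunE mul0r.
Qed.

Definition exp0 : 'I_#|F| := Ordinal (ltnW (card_finNzRing_gt1 F)).

Definition restr_expo (H : {set 'I_k}) (e : expo) : expo :=
  [ffun i => if i \in H then e i else exp0].

Definition deg (e : expo) : nat := l1 (fun i => nat_of_ord (e i)).

Lemma restr_expo_deg H e e0 : restr_expo H e = e0 -> (deg e <= deg e0)%N -> e = e0.
Proof.
move=> <- le_deg; apply/ffunP => i; apply: val_inj.
have le_restr j : true -> (restr_expo H e j <= e j ?= iff (restr_expo H e j == e j :> nat))%N.
  by move=> _; apply: leqif_eq; rewrite ffunE; case: ifP.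
have [le_sum eq_sum] := leqif_sum le_restr.
suff /forall_inP/(_ i isT)/eqP : [forall (j | true), restr_expo H e j == e j :> nat] by [].
by rewrite -eq_sum eqn_leq le_sum; exact: le_deg.
Qed.

Section HeadTail.
Variable H : {set 'I_k}.

Definition merge_pt (x y : pt F k) : pt F k := [ffun i => if i \in H then x i else y i].

Lemma mono_merge_pt x y e :
  monoE (merge_pt x y) e = monoE x (restr_expo H e) * monoE y (restr_expo (~: H) e).
Proof.
rewrite /monoE /mono -big_split; apply: eq_bigr => i _; rewrite !ffunE inE.
by case: (i \in H); rewrite /= expr0 ?mulr1 ?mul1r.
Qed.

Section Leading.
Variables (a : {ffun expo -> F}) (e0 : expo).
Hypotheses (head_e0 : restr_expo H e0 = e0) (nz_e0 : a e0 != 0).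
Hypothesis lead_e0 : forall e, a e != 0 -> restr_expo H e = e0 -> e = e0.

Lemma leading_fiber_nonzero y : exists x, reduced_eval a (merge_pt x y) != 0.
Proof.
(* Fixing the coordinates outside H to those of y leaves the reduced polynomial a',
   whose e0-coefficient is still a e0. *)
pose a' := [ffun e' : expo =>
  \sum_(e | restr_expo H e == e') a e * monoE y (restr_expo (~: H) e)].
have a'E x : reduced_eval a (merge_pt x y) = reduced_eval a' x.
  rewrite /reduced_eval (partition_big (restr_expo H) xpredT) //=.
  apply: eq_bigr => e' _; rewrite ffunE mulr_suml; apply: eq_bigr => e /eqP <-.
  by rewrite mono_merge_pt mulrA mulrAC.
have a'e0 : a' e0 = a e0.
  rewrite ffunE (bigD1 e0) ?head_e0 //= big1 ?addr0 => [|e /andP[/eqP re ne]].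
    suff -> : monoE y (restr_expo (~: H) e0) = 1 by rewrite mulr1.
    rewrite /monoE /mono big1 // => i _; rewrite ffunE inE.
    case: ifP => [/negbTE iH|_]; last by rewrite expr0.
    by rewrite -head_e0 ffunE iH expr0.
  have [/eqP ->|nz] := boolP (a e == 0); first by rewrite mul0r.
  by case/eqP: ne; apply: lead_e0.
apply/existsP; apply: contraT => /existsPn all0.
have : a' = 0 by apply: reduced_eval_eq0 => x; rewrite -a'E; apply/eqP/negPn/all0.
by move/ffunP/(_ e0)/eqP; rewrite a'e0 ffunE (negbTE nz_e0).
Qed.

Lemma card_nonzero_leading :
  (#|F| ^ #|~: H| <= #|[set x | reduced_eval a x != 0%R]|)%N.
Proof.
pose g y := merge_pt (xchoose (leading_fiber_nonzero y)) y.
have off_H y i : y \in pffun_on (0 : F) (~: H) predT -> i \in H -> y i = 0.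
  move=> /pffun_onP[/subsetP supp _] iH; apply/eqP/negP => /negP nz.
  by have := supp i; rewrite !inE iH => /(_ nz).
have g_inj : {in pffun_on (0 : F) (~: H) predT &, injective g}.
  move=> y1 y2 y1T y2T /ffunP eq_g; apply/ffunP => i.
  have := eq_g i; rewrite !ffunE; case: ifP => // iH _.
  by rewrite (off_H _ _ y1T) ?(off_H _ _ y2T).
rewrite -(card_pffun_on (0 : F) _ predT) -(card_in_imset g_inj).
apply/subset_leq_card/subsetP => _ /imsetP[y _ ->]; rewrite inE.
exact: xchooseP (leading_fiber_nonzero y).
Qed.

End Leading.

End HeadTail.

Lemma card_deg_support_le D :
  (#|[set a : {ffun expo -> F} | [forall e, (a e != 0%R) ==> (deg e <= D)]]|
    <= #|F| ^ 'C(k + D, D))%N.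
Proof.
apply: (@leq_trans #|pffun_on (0 : F) [set e : expo | (deg e <= D)%N] predT|).
  apply/subset_leq_card/subsetP => a; rewrite inE => /forall_inP supp.
  by apply/pffun_onP; split=> //; apply/subsetP => e; rewrite !inE => /supp.
rewrite card_pffun_on leq_pexp2l ?card_ffun_sum_le //.
exact/ltnW/card_finNzRing_gt1.
Qed.

Lemma card_zeros_leading (H : {set 'I_k}) (a : {ffun expo -> F}) (e0 : expo) :
  restr_expo H e0 = e0 -> a e0 != 0 -> (forall e, a e != 0 -> (deg e <= deg e0)%N) ->
  (#|[set x | reduced_eval a x == 0%R]| <= #|F| ^ k - #|F| ^ #|~: H|)%N.
Proof.
move=> head_e0 nz_e0 top_e0.
have lead_e0 e : a e != 0 -> restr_expo H e = e0 -> e = e0.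
  by move=> nz_e restr_e; apply: restr_expo_deg restr_e (top_e0 e nz_e).
have := card_nonzero_leading head_e0 nz_e0 lead_e0.
have := cardsC [set x | reduced_eval a x == 0]; rewrite card_ffun card_ord.
have -> : ~: [set x | reduced_eval a x == 0] = [set x | reduced_eval a x != 0].
  by apply/setP => x; rewrite !inE.
by move=> card_split card_nz; rewrite -card_split -addnBA // leq_addr.
Qed.

End ReducedPoly.

Lemma sum_enum_rank (R : nmodType) (T : finType) (G : 'I_#|T| -> R) :
  \sum_i G i = \sum_x G (enum_rank x).
Proof.
by rewrite (reindex enum_rank) //; exists enum_val => x _; rewrite ?enum_rankK ?enum_valK.
Qed.

Lemma linear_alternative (F : fieldType) (I J : finType) (M : I -> J -> F) (t : J -> F) :
  ~ (exists z : I -> F, forall j, \sum_i z i * M i j = t j) ->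
  exists u : J -> F, (forall i, \sum_j M i j * u j = 0) /\ \sum_j t j * u j = 1.
Proof.
move=> no_sol.
pose A := \matrix_(i < #|I|, j < #|J|) M (enum_val i) (enum_val j).
pose tv := \row_(j < #|J|) t (enum_val j).
have [/submxP[D tvE]|] := boolP (tv <= A)%MS.
  case: no_sol; exists (fun i => D 0 (enum_rank i)) => j.
  move/matrixP/(_ 0 (enum_rank j)): tvE; rewrite !mxE enum_rankK => ->.
  by rewrite sum_enum_rank; apply: eq_bigr => i _; rewrite mxE !enum_rankK.
rewrite submxE => /rV0Pn[j0]; set c := _ 0 j0 => nz_c.
exists (fun j => cokermx A (enum_rank j) j0 / c); split => [i|].
  have /matrixP/(_ (enum_rank i) j0) := mulmx_coker A.
  rewrite !mxE sum_enum_rank => AK0.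
  under eq_bigr do rewrite mulrA; rewrite -mulr_suml.
  suff -> : \sum_j M i j * cokermx A (enum_rank j) j0 = 0 by rewrite mul0r.
  by apply: (etrans _ AK0); apply: eq_bigr => j _; rewrite [A _ _]mxE !enum_rankK.
under eq_bigr do rewrite mulrA; rewrite -mulr_suml -(divff nz_c); congr (_ / _).
rewrite /c [(tv *m _) _ _]mxE sum_enum_rank.
by apply: eq_bigr => j _; rewrite [tv _ _]mxE enum_rankK.
Qed.

Lemma unsolvable_vanishing_poly (F : finFieldType) k (estar : 'I_k -> nat) dstar
    (es : expo F k) (S : {set pt F k}) :
  (forall i, es i = estar i :> nat) -> deg es = dstar -> (0 < dstar)%N ->
  ~~ solvable estar dstar S ->
  exists a : {ffun expo F k -> F}, [/\ a es != 0,
    forall e, a e != 0 -> (deg e <= dstar)%N & forall x, x \in S -> reduced_eval a x = 0].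
Proof.
move=> esE deg_es dstar_gt0 unsolv.
pose low e := (deg e <= dstar - 1)%N || (e == es).
(* Columns e outside [low] only add the trivial equations 0 = 0. *)
pose M x e : F := if (x \in S) && low e then monoE x e else 0.
have monoE_es x : monoE x es = mono x estar.
  by apply: eq_bigr => i _; rewrite esE.
have [[z zP]|u [uM ut]] := linear_alternative (M := M) (t := fun e => (e == es)%:R).
  case/negP: unsolv; apply/existsP; exists [ffun x => z x].
  have zS e : low e -> \sum_(x in S) [ffun x => z x] x * monoE x e = (e == es)%:R.
    move=> low_e; rewrite -zP big_mkcond; apply: eq_bigr => x _.
    by rewrite ffunE /M low_e andbT; case: (x \in S); rewrite ?mulr0.
  apply/andP; split; last first.
    by under eq_bigr do rewrite -monoE_es; rewrite zS ?eqxx // /low eqxx orbT.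
  apply/forall_inP => e deg_e; rewrite [X in X == _]zS /low ?deg_e //.
  rewrite (_ : e == es = false) //; apply: contraTF deg_e => /eqP ->.
  by rewrite -ltnNge -[l1 _]/(deg es) deg_es; lia.
exists [ffun e => if low e then u e else 0]; split.
- have u_es : u es = 1.
    by rewrite -ut (bigD1 es) //= eqxx mul1r big1 ?addr0 // => e /negbTE ->; rewrite mul0r.
  by rewrite ffunE /low eqxx orbT u_es oner_neq0.
- move=> e; rewrite ffunE /low; have [->|_] := eqVneq e es; first by rewrite deg_es.
  rewrite orbF; case: ifP => [deg_e _|_]; last by rewrite eqxx.
  exact: leq_trans deg_e (leq_subr 1 dstar).
- move=> x xS; apply: (etrans _ (uM x)); apply: eq_bigr => e _.
  by rewrite ffunE /M xS /=; case: (low e); rewrite ?mul0r ?mulr0 // mulrC.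
Qed.

Lemma card_unsolvable_le (F : finFieldType) k (estar : 'I_k -> nat) dstar
    (es : expo F k) (H : {set 'I_k}) Q :
  (forall i, es i = estar i :> nat) -> deg es = dstar -> (0 < dstar)%N ->
  restr_expo H es = es ->
  (#|[set S : {set pt F k} | (#|S| == Q) && ~~ solvable estar dstar S]|
    <= #|F| ^ 'C(k + dstar, dstar) * 'C(#|F| ^ k - #|F| ^ #|~: H|, Q))%N.
Proof.
move=> esE deg_es dstar_gt0 head_es.
pose P := [set a : {ffun expo F k -> F} |
  (a es != 0) && [forall e, (a e != 0) ==> (deg e <= dstar)%N]].
pose Z a := [set x : pt F k | reduced_eval a x == 0].
have card_Z a : a \in P -> (#|Z a| <= #|F| ^ k - #|F| ^ #|~: H|)%N.
  rewrite inE => /andP[nz_es /forall_inP supp].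
  by apply: card_zeros_leading head_es nz_es _ => e /supp; rewrite deg_es.
have card_P : (#|P| <= #|F| ^ 'C(k + dstar, dstar))%N.
  apply: leq_trans (card_deg_support_le F k dstar); apply/subset_leq_card/subsetP => a.
  by rewrite !inE => /andP[].
apply: leq_trans (leq_trans _ (card_draws_covered Q card_Z)) _.
  apply/subset_leq_card/subsetP => S; rewrite !inE => /andP[-> unsolv] /=.
  have [a [nz_es supp vanish]] := unsolvable_vanishing_poly esE deg_es dstar_gt0 unsolv.
  apply/exists_inP; exists a; first by rewrite inE nz_es; apply/forall_inP.
  by apply/subsetP => x xS; rewrite inE vanish.
by rewrite leq_mul2r card_P orbT.
Qed.

Lemma ler_bin_ratio (a N Q : nat) : (a <= N)%N -> (0 < N)%N -> (Q <= N)%N ->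
  'C(a, Q)%:R / 'C(N, Q)%:R <= (a%:R / N%:R) ^+ Q :> R.
Proof.
move=> le_aN N_gt0 le_QN.
rewrite expr_div_n ler_pdivrMr ?ltr0n ?bin_gt0 // mulrAC ler_pdivlMr ?exprn_gt0 ?ltr0n //.
by rewrite -!natrX -!natrM ler_nat leq_bin_ratio.
Qed.

Lemma exp_le (x y : R) : x <= y -> exp x <= exp y.
Proof.
rewrite le_eqVlt => /orP[/eqP -> //|/RltP lt_xy].
exact/ltW/RltP/exp_increasing.
Qed.

Lemma one_sub_inv_expr_le (q t B Q : nat) : (1 < q)%N ->
  2 * q%:R ^+ t * ln q%:R * B%:R <= Q%:R ->
  (1 - (q%:R ^+ t)^-1) ^+ Q <= (q%:R ^+ B ^+ 2)^-1 :> R.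
Proof.
move=> q_gt1 le_Q; set x : R := q%:R; set y := (x ^+ t)^-1.
have x_gt0 : 0 < x by rewrite ltr0n ltnW.
have xt_gt0 : 0 < x ^+ t by apply: exprn_gt0.
have y_le1 : y <= 1 by rewrite invf_le1 // exprn_ege1 // ler1n ltnW.
have le_yQ : 2 * ln x * B%:R <= y * Q%:R.
  rewrite -(ler_pM2l xt_gt0) [x ^+ t * (y * _)]mulrA /y mulfV ?gt_eqF // mul1r.
  by rewrite (le_trans _ le_Q) // !mulrA [x ^+ t * 2]mulrC.
apply: le_trans (_ : exp (- y) ^+ Q <= _).
  apply: lerXn2r; rewrite ?nnegrE ?subr_ge0 //; first exact/ltW/RltP/exp_pos.
  exact/RleP/exp_ineq1_le.
rewrite expRX mulNrn -[y *+ Q]mulr_natr.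
apply: le_trans (exp_le (_ : _ <= - (2 * ln x * B%:R))) _; first by rewrite lerN2.
rewrite mulr_natr mulr_natl -mulrnA exp_Ropp -!expRX exp_ln ?RinvE; last exact/RltP.
by rewrite -exprM mulnC exprM.
Qed.

Lemma draws_ratio_le (q t B M Q n : nat) : (1 < q)%N -> (0 < M)%N ->
  (Q <= M * q ^ t)%N -> 2 * q%:R ^+ t * ln q%:R * B%:R <= Q%:R ->
  (n <= q ^ B * 'C(M * q ^ t - M, Q))%N ->
  n%:R / 'C(M * q ^ t, Q)%:R <= (q%:R ^+ B)^-1 :> R.
Proof.
move=> q_gt1 M_gt0 le_QN le_Q le_n; set N := (M * q ^ t)%N.
have q_neq0 : q%:R != 0 :> R by rewrite pnatr_eq0 -lt0n ltnW.
have N_gt0 : (0 < N)%N by rewrite muln_gt0 M_gt0 expn_gt0 ltnW.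
have ratio : (N - M)%:R / N%:R = 1 - (q%:R ^+ t)^-1 :> R.
  have le_MN : (M <= N)%N by rewrite leq_pmulr // expn_gt0 ltnW.
  rewrite natrB // mulrBl divff ?pnatr_eq0 -?lt0n //.
  by rewrite natrM natrX invfM mulrA mulfV ?mul1r // pnatr_eq0 -lt0n.
apply: le_trans (_ : (q ^ B * 'C(N - M, Q))%N%:R / 'C(N, Q)%:R <= _).
  by rewrite ler_wpM2r ?invr_ge0 ?ler0n // ler_nat.
rewrite natrM -mulrA.
apply: le_trans (ler_wpM2l (ler0n _ _) (ler_bin_ratio (leq_subr M N) N_gt0 le_QN)) _.
rewrite ratio natrX; have := one_sub_inv_expr_le q_gt1 le_Q.
move/(ler_wpM2l (exprn_ge0 B (ler0n R q)))/le_trans; apply.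
by rewrite expr2 invfM mulrA mulfV ?mul1r // expf_neq0.
Qed.

Section EStar.
Variables (k q p s : nat).

Lemma estar_of_lt (i : 'I_k) : (0 < p <= q)%N -> (@estar_of k q p s i < q)%N.
Proof.
case/andP=> p_gt0 le_pq; have : (0 < q %/ p)%N by rewrite divn_gt0.
by rewrite /estar_of; case: ifP => _; [|case: ifP => _]; lia.
Qed.

Lemma estar_of_tail (i : 'I_k) : (s < i)%N -> @estar_of k q p s i = 0%N.
Proof. by rewrite /estar_of => lt_si; rewrite ltnNge ltnW // gtn_eqF. Qed.

Lemma l1_estar_of_gt0 : (1 < q)%N -> (s < k)%N -> (0 < l1 (@estar_of k q p s))%N.
Proof.
move=> q_gt1 lt_sk; rewrite /l1 (bigD1 (Ordinal lt_sk)) //= /estar_of ltnn eqxx.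
by rewrite addn_gt0 subn_gt0 q_gt1.
Qed.

End EStar.

Lemma estar_expo_spec (F : finFieldType) k p s : (0 < p <= #|F|)%N ->
  {es : expo F k | forall i, es i = @estar_of k #|F| p s i :> nat
                 & restr_expo [set i : 'I_k | (i <= s)%N] es = es}.
Proof.
move=> le_pq; exists [ffun i => Ordinal (estar_of_lt s i le_pq)] => [i|].
  by rewrite ffunE.
apply/ffunP => i; rewrite !ffunE inE; case: leqP => // lt_si.
by apply/eqP; rewrite -val_eqE /= estar_of_tail.
Qed.

Theorem lemma4p3 (p l : nat) (F : finFieldType) (d s r k Q : nat) :
  prime p -> #|F| = (p ^ l)%N -> (0 < d)%N ->
  d.+1 = (s * (#|F| - #|F| %/ p) + r)%N ->
  (r < #|F| - #|F| %/ p)%N ->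
  (s.+1 <= k)%N ->
  let q := #|F| in
  let estar := @estar_of k q p s in
  let dstar := l1 estar in
  let B := 'C(k + dstar, dstar) in
  let Qk : R := 2 * (q%:R) ^+ s.+1 * Rpower.ln q%:R * B%:R in
  (* Q = Q(k) = 2 q^(s+1) log(q) binom(k+dstar, dstar), rounded up to an integer *)
  Qk <= Q%:R < Qk + 1 ->
  (Q <= q ^ k)%N ->
  @prob_unsolvable F k estar dstar Q <= (q%:R ^+ B)^-1.
Proof.
move=> p_pr card_F _ _ _ lt_sk q estar dstar B Qk /andP[le_Qk_Q _] le_Q_N.
have q_gt1 : (1 < q)%N := card_finNzRing_gt1 F.
have le_pq : (0 < p <= q)%N.
  have l_gt0 : (0 < l)%N by move: q_gt1; rewrite /q card_F; case: (l).
  by rewrite prime_gt0 //= /q card_F -{1}(expn1 p) leq_pexp2l // prime_gt0.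
have [es esE head_es] := estar_expo_spec k s le_pq.
have deg_es : deg es = dstar by apply: eq_bigr => i _; rewrite esE.
have bad_le := card_unsolvable_le Q esE deg_es (@l1_estar_of_gt0 k q p s q_gt1 lt_sk) head_es.
have N_eq : (q ^ k = q ^ (k - s.+1) * q ^ s.+1)%N by rewrite -expnD subnK.
have card_pt : #|pt F k| = (q ^ k)%N by rewrite card_ffun card_ord.
rewrite /prob_unsolvable card_draws card_pt N_eq.
apply: (draws_ratio_le q_gt1); first by rewrite expn_gt0 ltnW.
- by rewrite -N_eq.
- exact: le_Qk_Q.
apply: leq_trans bad_le _; rewrite -N_eq; apply: leq_mul => //.
apply/leq_bin2l/leq_sub2l/leq_pexp2l; [exact: ltnW | exact: card_setC_ord_leq].
Qed.
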